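(* Let $g\in\Gamma$, $p\in\Pi$, and $\alpha\in g\Gamma_p$, and let $\mathcal{H}\subset X$ be the horoball based at the coset $g\Gamma_p$. Let $\tau$ be a regular geodesic in $X$ from $\mathrm{id}$ to $\alpha$. Then $\tau\cap\mathcal{H}$ contains a subsegment of length at least $|\alpha|_X-(|g|_X+12\delta)$. Moreover, if $\mathcal{H}'\ne\mathcal{H}$ is any other horoball of $X$, then every component of $\tau\cap\mathcal{H}'$ has length at most $|g|_X+12\delta$.
   Context: $\Gamma$ is a finitely generated group hyperbolic relative to a finite collection $\mathcal{P}$ of infinite subgroups, with finite symmetric generating set $\mathcal{S}$ such that $P\cap\mathcal{S}$ generates $P$ for each $P\in\mathcal{P}$. $X$ is the Groves–Manning cusped space: $\mathrm{Cay}(\Gamma,\mathcal{S})$ with a combinatorial horoball glued along each left coset $gP$; it is a locally finite graph with unit-length edges and metric $d_X$, and $\delta\ge1$ is an integer such that $X$ is $\delta$-hyperbolic. $|g|_X:=d_X(\mathrm{id},g)$. $\Pi$ is the set of points of the Bowditch boundary fixed by the groups in $\mathcal{P}$, and $\Gamma_p\in\mathcal{P}$ the group fixing $p\in\Pi$. Depth $D_X$ of a vertex is its distance to the Cayley graph, extended linearly over edges. A horoball is the smallest full subgraph containing the closure of a component of $D_X^{-1}(0,\infty)$; it meets the Cayley graph in a single coset $gP$ and is said to be based at $gP$. A geodesic $\gamma:[a,b]\to\mathcal{H}$ in a horoball is regular if there are $a\le A\le B\le b$ with $B-A\le3$ such that $\frac{d}{dt}D_X(\gamma(t))$ is $1$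 for $t<A$, $0$ for $A<t<B$, $-1$ for $t>B$; a geodesic in $X$ is regular if every intersection with a horoball is regular. *)

From Stdlib Require Import List Arith Lia.
Import ListNotations.
Set Implicit Arguments.

Record group := Group {
  carrier :> Type;
  gmul : carrier -> carrier -> carrier;
  ginv : carrier -> carrier;
  gone : carrier;
  gmulA : forall x y z, gmul x (gmul y z) = gmul (gmul x y) z;
  gmul1l : forall x, gmul gone x = x;
  gmulVl : forall x, gmul (ginv x) x = gone }.

Arguments gmul {g}.
Arguments ginv {g}.
Arguments gone {g}.

Section CuspedSpace.
Variable G : group.

Definition gprod (l : list G) : G := fold_right gmul gone l.

Definition is_subgroup (P : G -> Prop) : Prop :=
  P gone /\ (forall x y, P x -> P y -> P (gmul x y)) /\ (forall x, P x -> P (ginv x)).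

Definition generated_by (Q : G -> Prop) (S : list G) (x : G) : Prop :=
  exists l : list G, (forall s, In s l -> In s S /\ Q s) /\ gprod l = x.

Definition word_len_le (Q : G -> Prop) (S : list G) (x : G) (n : nat) : Prop :=
  exists l : list G, (forall s, In s l -> In s S /\ Q s) /\ length l <= n /\ gprod l = x.

Variable I : Type.            (* index set of the peripheral collection *)
Variable P : I -> G -> Prop.  (* the peripheral subgroups P_i *)
Variable Sg : list G.         (* the finite symmetric generating set *)

(* Vertices of the Groves–Manning cusped space X:
   [cay h]      : the vertex h of Cay(G,S) (depth 0);
   [hor i h k]  : the vertex over h (in the horoball on the coset h P_i)
                  at depth k+1. *)
Inductive vert : Type :=
| cay : G -> vert
| hor : I -> G -> nat -> vert.

Inductive edge0 : vert -> vert -> Prop :=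
| e_cay : forall h s, In s Sg -> edge0 (cay h) (cay (gmul h s))
| e_vert0 : forall i h, edge0 (cay h) (hor i h 0)
| e_vert : forall i h k, edge0 (hor i h k) (hor i h (S k))
| e_horiz : forall i h h' k,
    P i (gmul (ginv h) h') -> h <> h' ->
    word_len_le (P i) Sg (gmul (ginv h) h') (2 ^ (S k)) ->
    edge0 (hor i h k) (hor i h' k).

Definition adj (u v : vert) : Prop := edge0 u v \/ edge0 v u.

Definition depth (v : vert) : nat :=
  match v with cay _ => 0 | hor _ _ k => S k end.

Definition path_of (f : nat -> vert) (n : nat) (u v : vert) : Prop :=
  f 0 = u /\ f n = v /\ forall j, j < n -> adj (f j) (f (S j)).

Definition is_dist (u v : vert) (n : nat) : Prop :=
  (exists f, path_of f n u v) /\ forall f m, path_of f m u v -> n <= m.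

Definition geodesic (f : nat -> vert) (n : nat) (u v : vert) : Prop :=
  path_of f n u v /\ forall f' m, path_of f' m u v -> n <= m.

(* δ-slim geodesic triangles (with vertex corners) *)
Definition hyperbolic (delta : nat) : Prop :=
  forall x y z f1 n1 f2 n2 f3 n3,
    geodesic f1 n1 x y -> geodesic f2 n2 y z -> geodesic f3 n3 z x ->
    forall t, t <= n1 ->
      exists w, ((exists t', t' <= n2 /\ w = f2 t') \/ (exists t', t' <= n3 /\ w = f3 t')) /\
        exists p d, d <= delta /\ path_of p d (f1 t) w.

(* vertex set of the horoball based at the coset g P_i
   (the smallest full subgraph containing the closure of the
   corresponding component of D_X^{-1}(0,oo)) *)
Definition inH (i : I) (g : G) (v : vert) : Prop :=
  match v with
  | cay h => P i (gmul (ginv g) h)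
  | hor j h _ => j = i /\ P i (gmul (ginv g) h)
  end.

Definition component (Hp : vert -> Prop) (f : nat -> vert) (n k l : nat) : Prop :=
  k <= l <= n /\ (forall t, k <= t <= l -> Hp (f t)) /\
  (k = 0 \/ ~ Hp (f (k - 1))) /\ (l = n \/ ~ Hp (f (S l))).

Definition regular_piece (f : nat -> vert) (k l : nat) : Prop :=
  exists A B, k <= A /\ A <= B /\ B <= l /\ B - A <= 3 /\
    forall j, k <= j < l ->
      (j < A -> depth (f (S j)) = S (depth (f j))) /\
      (A <= j < B -> depth (f (S j)) = depth (f j)) /\
      (B <= j -> depth (f j) = S (depth (f (S j)))).

Definition regular (f : nat -> vert) (n : nat) : Prop :=
  forall i g k l, component (inH i g) f n k l -> regular_piece f k l.

End CuspedSpace.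

Arguments cay {G I}.
Arguments is_subgroup {G}.
Arguments generated_by {G}.
Arguments word_len_le {G}.
Arguments gprod {G}.
Arguments hyperbolic {G I}.

(* Let sigma be a geodesic from id to g, gamma the geodesic that climbs from g
   to depth M and then crosses to alpha by one horizontal edge (M is chosen so
   large that this edge exists), and v the vertical ray from alpha to the same
   point.  Two thin triangles make the quadrilateral (tau, v, gamma, sigma)
   2δ-thin, so every vertex of tau is 2δ-close to sigma, to gamma, or to v.
   A vertex deep in a foreign horoball cannot be close to gamma or v, which
   lie in H, and a vertex close to sigma has depth plus position at most
   |g| + 4δ; as a regular component climbs and descends at unit speed, this
   bounds the foreign components.  In H, let ts be the last time tau is close
   to sigma or gamma: then ts <= |g| + depth (tau ts) + 4δ + 1, and every
   later vertex is close to v, hence deep in H or within 4δ of alpha.  So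
   either tau (ts + 1) is deep in H, and its component in H starts before
   |g| + 4δ + 1 and ends within 4δ + 1 of alpha, or |alpha| <= |g| + 8δ + 3. *)

From Stdlib Require Import List Arith Lia Classical Wf_nat.
Set Implicit Arguments.
Unset Strict Implicit.

Section GroupLaws.
Variable G : group.

Lemma gmulV (x : G) : gmul x (ginv x) = gone.
Proof.
  rewrite <- (gmul1l _ (gmul x (ginv x))), <- (gmulVl _ (ginv x)) at 1.
  rewrite <- gmulA, (gmulA _ (ginv x) x (ginv x)), gmulVl, gmul1l.
  apply gmulVl.
Qed.

Lemma gmul1r (x : G) : gmul x gone = x.
Proof. rewrite <- (gmulVl _ x), gmulA, gmulV, gmul1l. reflexivity. Qed.

Lemma ginv_unique (x y : G) : gmul y x = gone -> y = ginv x.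
Proof. intros H. rewrite <- (gmul1r y), <- (gmulV x), gmulA, H, gmul1l. reflexivity. Qed.

Lemma ginv_mul (x y : G) : ginv (gmul x y) = gmul (ginv y) (ginv x).
Proof.
  symmetry; apply ginv_unique.
  rewrite <- gmulA, (gmulA _ (ginv x) x y), gmulVl, gmul1l, gmulVl. reflexivity.
Qed.

Lemma ginvK (x : G) : ginv (ginv x) = x.
Proof. symmetry; apply ginv_unique, gmulV. Qed.

End GroupLaws.

Section Cosets.
Variables (G : group) (Q : G -> Prop).
Hypothesis HQ : is_subgroup Q.

Lemma coset_refl (x : G) : Q (gmul (ginv x) x).
Proof. rewrite gmulVl. apply HQ. Qed.

Lemma coset_sym (x y : G) : Q (gmul (ginv x) y) -> Q (gmul (ginv y) x).
Proof. intros H. apply HQ in H. rewrite ginv_mul, ginvK in H. exact H. Qed.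

Lemma coset_trans (x y z : G) :
  Q (gmul (ginv x) y) -> Q (gmul (ginv y) z) -> Q (gmul (ginv x) z).
Proof.
  intros Hxy Hyz. pose proof (proj1 (proj2 HQ) _ _ Hxy Hyz) as H.
  rewrite <- gmulA, (gmulA _ y (ginv y) z), gmulV, gmul1l in H. exact H.
Qed.

End Cosets.

Lemma exists_run_start (Q : nat -> Prop) u : Q u ->
  exists k, k <= u /\ (forall t, k <= t <= u -> Q t) /\ (k = 0 \/ ~ Q (k - 1)).
Proof.
  induction u as [|u IH]; intros Hu.
  - exists 0. split; [lia|]. split; [|now left].
    intros t Ht. replace t with 0 by lia. exact Hu.
  - destruct (classic (Q u)) as [Hq|Hq].
    + destruct (IH Hq) as [k [Hk [Hrun Hstart]]]. exists k.
      split; [lia|]. split; [|exact Hstart].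
      intros t Ht. destruct (Nat.eq_dec t (S u)) as [->|]; [exact Hu|]. apply Hrun; lia.
    + exists (S u). split; [lia|]. split.
      * intros t Ht. replace t with (S u) by lia. exact Hu.
      * right. rewrite Nat.sub_succ, Nat.sub_0_r. exact Hq.
Qed.

Lemma exists_run_end (Q : nat -> Prop) n u : u <= n -> Q u ->
  exists l, u <= l <= n /\ (forall t, u <= t <= l -> Q t) /\ (l = n \/ ~ Q (S l)).
Proof.
  remember (n - u) as d eqn:Hd. revert u Hd.
  induction d as [|d IH]; intros u Hd Hun Hu.
  - exists u. split; [lia|]. split; [|left; lia].
    intros t Ht. replace t with u by lia. exact Hu.
  - destruct (classic (Q (S u))) as [Hq|Hq].
    + destruct (IH (S u) ltac:(lia) ltac:(lia) Hq) as [l [Hl [Hrun Hend]]].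
      exists l. split; [lia|]. split; [|exact Hend].
      intros t Ht. destruct (Nat.eq_dec t u) as [->|]; [exact Hu|]. apply Hrun; lia.
    + exists u. split; [lia|]. split; [|now right].
      intros t Ht. replace t with u by lia. exact Hu.
Qed.

Lemma exists_last_nat (Q : nat -> Prop) n : Q 0 ->
  exists t, t <= n /\ Q t /\ forall t', t < t' <= n -> ~ Q t'.
Proof.
  intros H0. induction n as [|n IH].
  - exists 0. split; [lia|]. split; [exact H0|]. lia.
  - destruct (classic (Q (S n))) as [Hq|Hq].
    + exists (S n). split; [lia|]. split; [exact Hq|]. lia.
    + destruct IH as [t [Ht [Qt Hlast]]]. exists t. split; [lia|]. split; [exact Qt|].
      intros t' Ht'. destruct (Nat.eq_dec t' (S n)) as [->|]; [exact Hq|]. apply Hlast; lia.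
Qed.

Section CuspedSpace.
Variables (G : group) (I : Type) (P : I -> G -> Prop) (Sg : list G).

Local Notation V := (vert G I).
Local Notation adjacent := (adj P Sg).
Local Notation is_path := (path_of P Sg).
Local Notation is_geodesic := (geodesic P Sg).

Hypothesis HPsub : forall i, is_subgroup (P i).

Lemma adj_sym u v : adjacent u v -> adjacent v u.
Proof. unfold adj; tauto. Qed.

Lemma adj_depth u v : adjacent u v -> depth u <= S (depth v) /\ depth v <= S (depth u).
Proof. intros [e|e]; destruct e; simpl; lia. Qed.

Lemma path_rev f n u v : is_path f n u v -> is_path (fun t => f (n - t)) n v u.
Proof.
  intros [F0 [F1 F2]]. split; [|split].
  - rewrite Nat.sub_0_r; exact F1.
  - rewrite Nat.sub_diag; exact F0.
  - intros j Hj. apply adj_sym. replace (n - j) with (S (n - S j)) by lia. apply F2; lia.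
Qed.

Lemma path_cat f m h k u v w : is_path f m u v -> is_path h k v w ->
  is_path (fun t => if t <=? m then f t else h (t - m)) (m + k) u w.
Proof.
  intros [F0 [F1 F2]] [H0 [H1 H2]]. split; [|split].
  - exact F0.
  - destruct (Nat.leb_spec (m + k) m).
    + replace k with 0 in * by lia. rewrite Nat.add_0_r. congruence.
    + replace (m + k - m) with k by lia. exact H1.
  - intros j Hj. destruct (Nat.leb_spec j m), (Nat.leb_spec (S j) m).
    + apply F2; lia.
    + replace j with m by lia. rewrite F1, <- H0. replace (S m - m) with 1 by lia.
      apply H2; lia.
    + lia.
    + replace (S j - m) with (S (j - m)) by lia. apply H2; lia.
Qed.

Lemma path_sub f n u v a b : is_path f n u v -> a <= b <= n ->
  is_path (fun t => f (a + t)) (b - a) (f a) (f b).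
Proof.
  intros [_ [_ F2]] Hab. split; [|split].
  - rewrite Nat.add_0_r; reflexivity.
  - f_equal; lia.
  - intros j Hj. replace (a + S j) with (S (a + j)) by lia. apply F2; lia.
Qed.

Lemma path_depth_le f m u v : is_path f m u v -> depth v <= depth u + m.
Proof.
  intros [F0 [F1 F2]]. subst u v.
  assert (H : forall j, j <= m -> depth (f j) <= depth (f 0) + j).
  { induction j as [|j IH]; intros Hj; [lia|].
    pose proof (adj_depth (F2 j ltac:(lia))). specialize (IH ltac:(lia)). lia. }
  exact (H m (le_n m)).
Qed.

Lemma path_depth_ge f m u v : is_path f m u v -> depth u <= depth v + m.
Proof. intros H. exact (path_depth_le (path_rev H)). Qed.

Lemma path_depth_diff f n u v a b : is_path f n u v -> a <= b <= n ->
  depth (f b) <= depth (f a) + (b - a) /\ depth (f a) <= depth (f b) + (b - a).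
Proof.
  intros Hp Hab. pose proof (path_sub Hp Hab) as Hs.
  split; [exact (path_depth_le Hs) | exact (path_depth_ge Hs)].
Qed.

Definition dist_le (x y : V) (c : nat) : Prop :=
  exists p d, d <= c /\ is_path p d x y.

Lemma path_dist_le f n x y : is_path f n x y -> dist_le x y n.
Proof. intros H. exists f, n. split; [lia | exact H]. Qed.

Lemma dist_le_refl x : dist_le x x 0.
Proof. exists (fun _ => x), 0. split; [lia|]. split; [|split]; try reflexivity; lia. Qed.

Lemma dist_le_sym x y c : dist_le x y c -> dist_le y x c.
Proof.
  intros [p [d [Hd Hp]]]. exists (fun t => p (d - t)), d.
  split; [exact Hd | now apply path_rev].
Qed.

Lemma dist_le_trans x y z a b : dist_le x y a -> dist_le y z b -> dist_le x z (a + b).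
Proof.
  intros [p [d [Hd Hp]]] [q [e [He Hq]]].
  exists (fun t => if t <=? d then p t else q (t - d)), (d + e).
  split; [lia | exact (path_cat Hp Hq)].
Qed.

Lemma dist_le_weaken x y a b : dist_le x y a -> a <= b -> dist_le x y b.
Proof. intros [p [d [Hd Hp]]] Hab. exists p, d. split; [lia | exact Hp]. Qed.

Lemma dist_le_depth x y c : dist_le x y c ->
  depth x <= depth y + c /\ depth y <= depth x + c.
Proof.
  intros [p [d [Hd Hp]]].
  pose proof (path_depth_le Hp). pose proof (path_depth_ge Hp). lia.
Qed.

Lemma geodesic_rev f n x y : is_geodesic f n x y -> is_geodesic (fun t => f (n - t)) n y x.
Proof.
  intros [Hp Hmin]. split; [now apply path_rev|].
  intros f' m Hf'. exact (Hmin _ _ (path_rev Hf')).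
Qed.

Lemma geodesic_le_dist f n x y c : is_geodesic f n x y -> dist_le x y c -> n <= c.
Proof. intros [_ Hmin] [p [d [Hd Hp]]]. pose proof (Hmin _ _ Hp). lia. Qed.

Lemma geodesic_dist_start f n x y t : is_geodesic f n x y -> t <= n -> dist_le x (f t) t.
Proof.
  intros [Hp _] Ht. pose proof (path_sub Hp (conj (Nat.le_0_l t) Ht)) as Hs.
  destruct Hp as [F0 _]. rewrite F0, Nat.sub_0_r in Hs. exact (path_dist_le Hs).
Qed.

Lemma geodesic_dist_end f n x y t : is_geodesic f n x y -> t <= n -> dist_le (f t) y (n - t).
Proof.
  intros [Hp _] Ht. pose proof (path_sub Hp (conj Ht (le_n n))) as Hs.
  destruct Hp as [_ [F1 _]]. rewrite F1 in Hs. exact (path_dist_le Hs).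
Qed.

Lemma geodesic_le_dist_start f n x y t c :
  is_geodesic f n x y -> t <= n -> dist_le x (f t) c -> t <= c.
Proof.
  intros Hg Ht Hc.
  pose proof (geodesic_le_dist Hg (dist_le_trans Hc (geodesic_dist_end Hg Ht))). lia.
Qed.

Lemma geodesic_le_dist_end f n x y t c :
  is_geodesic f n x y -> t <= n -> dist_le (f t) y c -> n - t <= c.
Proof.
  intros Hg Ht Hc.
  pose proof (geodesic_le_dist Hg (dist_le_trans (geodesic_dist_start Hg Ht) Hc)). lia.
Qed.

Lemma geodesic_of_dist_le x y c : dist_le x y c -> exists f n, is_geodesic f n x y.
Proof.
  intros [p [d [_ Hp]]].
  destruct (dec_inh_nat_subset_has_unique_least_element
              (fun n => exists f, is_path f n x y) (fun n => classic _)
              (ex_intro _ d (ex_intro _ p Hp)))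
    as [n [[[f Hf] Hmin] _]].
  exists f, n. split; [exact Hf|]. intros f' m Hm. apply Hmin. now exists f'.
Qed.

Lemma thin_triangle δ (Hhyp : hyperbolic P Sg δ) f1 n1 f2 n2 f3 n3 x y z :
  is_geodesic f1 n1 x y -> is_geodesic f2 n2 z y -> is_geodesic f3 n3 x z ->
  forall t, t <= n1 -> exists s,
    (s <= n2 /\ dist_le (f1 t) (f2 s) δ) \/ (s <= n3 /\ dist_le (f1 t) (f3 s) δ).
Proof.
  intros G1 G2 G3 t Ht.
  destruct (Hhyp _ _ _ _ _ _ _ _ _ G1 (geodesic_rev G2) (geodesic_rev G3) t Ht)
    as [w [[[s [Hs ->]]|[s [Hs ->]]] Hd]].
  - exists (n2 - s). left. split; [lia | exact Hd].
  - exists (n3 - s). right. split; [lia | exact Hd].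
Qed.

Lemma inH_adj j h u v : inH P j h u -> 0 < depth u -> adjacent u v -> inH P j h v.
Proof.
  destruct u as [x|j0 x k]; simpl; [lia|]. intros [-> Hx] _ [e|e];
    inversion e; subst; simpl; auto; split; auto.
  all: first [ exact (coset_trans (HPsub j) Hx ltac:(eassumption))
             | exact (coset_trans (HPsub j) Hx (coset_sym (HPsub j) ltac:(eassumption))) ].
Qed.

(* Deep vertices of a horoball have all their neighbours in it, and depth drops
   by at most one per edge. *)
Lemma dist_le_inH j h x w c : dist_le x w c -> inH P j h x -> c < depth x ->
  inH P j h w /\ 0 < depth w.
Proof.
  intros [p [d [Hd [F0 [F1 F2]]]]] Hx Hc. subst x w.
  assert (H : forall t, t <= d -> inH P j h (p t) /\ depth (p 0) <= depth (p t) + t).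
  { induction t as [|t IH]; intros Ht; [split; [exact Hx | lia]|].
    destruct (IH ltac:(lia)) as [Hin Hdep]. pose proof (F2 t ltac:(lia)) as Ha.
    split; [exact (inH_adj Hin ltac:(lia) Ha)|]. apply adj_depth in Ha. lia. }
  destruct (H d (le_n d)). split; [assumption | lia].
Qed.

Lemma inH_eq_of_deep i g j h w : inH P i g w -> inH P j h w -> 0 < depth w ->
  forall v, inH P i g v <-> inH P j h v.
Proof.
  destruct w as [x|j0 x k]; simpl; [lia|]. intros [-> Hg] [<- Hh] _.
  assert (Hgh : P i (gmul (ginv g) h))
    by exact (coset_trans (HPsub i) Hg (coset_sym (HPsub i) Hh)).
  pose proof (coset_sym (HPsub i) Hgh) as Hhg.
  intros [y|j1 y k1]; simpl; split.
  - exact (coset_trans (HPsub i) Hhg).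
  - exact (coset_trans (HPsub i) Hgh).
  - intros [? Hy]; split; [assumption | exact (coset_trans (HPsub i) Hhg Hy)].
  - intros [? Hy]; split; [assumption | exact (coset_trans (HPsub i) Hgh Hy)].
Qed.

(* Otherwise the path back from [w] would keep [x], hence [y], deep in the horoball. *)
Lemma inH_depth_le_of_exit j h x y w c : adjacent x y -> ~ (inH P j h y /\ 0 < depth y) ->
  inH P j h w -> dist_le x w c -> depth w <= c + 1.
Proof.
  intros Hxy Hy Hw Hd. destruct (le_lt_dec (depth w) (c + 1)) as [|Hdeep]; [assumption|].
  exfalso. destruct (dist_le_inH (dist_le_sym Hd) Hw ltac:(lia)) as [Hx Hx0].
  pose proof (inH_adj Hx Hx0 Hxy) as Hyin. pose proof (adj_depth Hxy).
  pose proof (dist_le_depth Hd). apply Hy. split; [exact Hyin | lia].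
Qed.

Lemma component_ends_depth0 j h f n u v k l : is_path f n u v -> depth u = 0 -> depth v = 0 ->
  component (inH P j h) f n k l -> depth (f k) = 0 /\ depth (f l) = 0.
Proof.
  intros [F0 [F1 F2]] Hu Hv [[Hkl Hln] [Hrun [Hk Hl]]]. split.
  - destruct Hk as [->|Hk]; [congruence|].
    destruct k as [|k]; [congruence|].
    destruct (Nat.eq_dec (depth (f (S k))) 0) as [|Hd]; [assumption|]. exfalso. apply Hk.
    rewrite Nat.sub_succ, Nat.sub_0_r.
    apply (inH_adj (Hrun (S k) ltac:(lia)) ltac:(lia)). apply adj_sym, F2. lia.
  - destruct Hl as [->|Hl]; [congruence|].
    destruct (Nat.eq_dec (depth (f l)) 0) as [|Hd]; [assumption|]. exfalso. apply Hl.
    apply (inH_adj (Hrun l ltac:(lia)) ltac:(lia)). apply F2.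
    destruct (Nat.eq_dec l n) as [->|]; [congruence | lia].
Qed.

Lemma component_around (Hp : V -> Prop) f n u : u <= n -> Hp (f u) ->
  exists k l, component Hp f n k l /\ k <= u <= l.
Proof.
  intros Hun Hu.
  destruct (exists_run_start (Q := fun t => Hp (f t)) Hu) as [k [Hku [Hleft Hk]]].
  destruct (exists_run_end (Q := fun t => Hp (f t)) Hun Hu) as [l [Hul [Hright Hl]]].
  exists k, l. split; [|lia]. split; [lia|]. split; [|split; assumption].
  intros t Ht. destruct (le_lt_dec t u); [apply Hleft | apply Hright]; lia.
Qed.

Lemma regular_piece_profile (f : nat -> V) k l :
  depth (f k) = 0 -> depth (f l) = 0 -> regular_piece f k l ->
  exists A, k <= A <= l /\ depth (f A) = A - k /\ l - k <= 2 * (A - k) + 3.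
Proof.
  intros Hk Hl [A [B [HkA [HAB [HBl [HBA H]]]]]].
  assert (Hup : forall t, t <= A - k -> depth (f (k + t)) = t).
  { induction t as [|t IH]; intros Ht; [rewrite Nat.add_0_r; exact Hk|].
    replace (k + S t) with (S (k + t)) by lia.
    rewrite (proj1 (H (k + t) ltac:(lia)) ltac:(lia)), IH by lia. reflexivity. }
  assert (Hflat : forall t, t <= B - A -> depth (f (A + t)) = depth (f A)).
  { induction t as [|t IH]; intros Ht; [rewrite Nat.add_0_r; reflexivity|].
    replace (A + S t) with (S (A + t)) by lia.
    rewrite (proj1 (proj2 (H (A + t) ltac:(lia))) ltac:(lia)). apply IH; lia. }
  assert (Hdown : forall t, t <= l - B -> depth (f (B + t)) + t = depth (f B)).
  { induction t as [|t IH]; intros Ht; [rewrite !Nat.add_0_r; reflexivity|].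
    replace (B + S t) with (S (B + t)) by lia.
    pose proof (proj2 (proj2 (H (B + t) ltac:(lia))) ltac:(lia)). rewrite <- IH by lia. lia. }
  specialize (Hup (A - k) (le_n _)). replace (k + (A - k)) with A in Hup by lia.
  specialize (Hflat (B - A) (le_n _)). replace (A + (B - A)) with B in Hflat by lia.
  specialize (Hdown (l - B) (le_n _)). replace (B + (l - B)) with l in Hdown by lia.
  exists A. split; [lia|]. split; [exact Hup | lia].
Qed.

Definition up (i : I) (c : G) (e : nat) : V :=
  match e with 0 => cay c | S e' => hor G i c e' end.

Lemma depth_up i c e : depth (up i c e) = e.
Proof. destruct e; reflexivity. Qed.

Lemma inH_up i g c e : P i (gmul (ginv g) c) -> inH P i g (up i c e).
Proof. destruct e; simpl; auto. Qed.

Lemma adj_up i c t : adjacent (up i c t) (up i c (S t)).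
Proof. left. destruct t; constructor. Qed.

Lemma up_path i c e : is_path (up i c) e (cay c) (up i c e).
Proof. split; [|split]; try reflexivity. intros t _. apply adj_up. Qed.

Lemma up_geodesic i c e : is_geodesic (up i c) e (cay c) (up i c e).
Proof.
  split; [apply up_path|]. intros f m Hf.
  pose proof (path_depth_le Hf) as Hd. rewrite depth_up in Hd. simpl in Hd. lia.
Qed.

Definition base (v : V) : G := match v with cay h => h | hor _ _ h _ => h end.

Lemma adj_base u v : adjacent u v -> depth v = S (depth u) -> base v = base u.
Proof. intros [e|e] Hd; inversion e; subst; simpl in *; reflexivity || lia. Qed.

Lemma ascending_path_base f m u v : is_path f m u v -> depth v = depth u + m -> base v = base u.
Proof.
  intros Hp Hd. pose proof Hp as [F0 [F1 F2]].
  assert (Hdep : forall t, t <= m -> depth (f t) = depth u + t).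
  { intros t Ht. pose proof (path_depth_diff Hp (conj (Nat.le_0_l t) Ht)).
    pose proof (path_depth_diff Hp (conj Ht (le_n m))). rewrite F0, F1 in *. lia. }
  assert (Hbase : forall t, t <= m -> base (f t) = base u).
  { induction t as [|t IH]; intros Ht; [rewrite F0; reflexivity|].
    rewrite <- IH by lia. apply adj_base; [apply F2; lia|]. rewrite !Hdep by lia. lia. }
  rewrite <- F1. exact (Hbase m (le_n m)).
Qed.

Definition gam (i : I) (g a : G) (M t : nat) : V :=
  if t <=? M then up i g t else up i a M.

Lemma gam_geodesic i g a K : g <> a -> P i (gmul (ginv g) a) ->
  word_len_le (P i) Sg (gmul (ginv g) a) (2 ^ S K) ->
  is_geodesic (gam i g a (S K)) (S (S K)) (cay g) (up i a (S K)).
Proof.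
  intros Hne Hga Hw. split; [split; [|split]|].
  - reflexivity.
  - unfold gam. destruct (Nat.leb_spec (S (S K)) (S K)); [lia | reflexivity].
  - intros j Hj. unfold gam.
    destruct (Nat.leb_spec j (S K)), (Nat.leb_spec (S j) (S K)); try lia.
    + apply adj_up.
    + replace j with (S K) by lia. left. now constructor.
  - intros f m Hf. pose proof (path_depth_le Hf) as Hd. rewrite depth_up in Hd. simpl in Hd.
    destruct (Nat.eq_dec m (S K)) as [->|]; [|lia].
    apply ascending_path_base in Hf; [|rewrite depth_up; reflexivity].
    simpl in Hf. congruence.
Qed.

Lemma gam_inH i g a M t : P i (gmul (ginv g) a) -> inH P i g (gam i g a M t).
Proof.
  intros Hga. unfold gam. destruct (t <=? M); apply inH_up; [apply coset_refl, HPsub | exact Hga].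
Qed.

Lemma gam_depth i g a M t : t <= S M -> t <= S (depth (gam i g a M t)).
Proof. intros Ht. unfold gam. destruct (Nat.leb_spec t M); rewrite depth_up; lia. Qed.

Section Quadrilateral.
Variables (δ : nat) (i : I) (g α : G) (ng n M : nat) (σ τ : nat -> V).
Hypothesis Hhyp : hyperbolic P Sg δ.
Hypothesis Hα : P i (gmul (ginv g) α).
Hypothesis Hσ : is_geodesic σ ng (cay gone) (cay g).
Hypothesis Hτ : is_geodesic τ n (cay gone) (cay α).
Hypothesis Hγ : is_geodesic (gam i g α M) (S M) (cay g) (up i α M).

Definition near_sigma (x : V) : Prop := exists s, s <= ng /\ dist_le x (σ s) (2 * δ).
Definition near_gamma (x : V) : Prop :=
  exists s, s <= S M /\ dist_le x (gam i g α M s) (2 * δ).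
Definition near_ray (x : V) : Prop := exists e, dist_le x (up i α e) (2 * δ).
Definition deep_in_H (x : V) : Prop := inH P i g x /\ 0 < depth x.

(* The triangles (lam, gamma, sigma) and (tau, ray, lam), with lam a geodesic
   from id to the top of the ray, are δ-thin. *)
Lemma tau_near_sides t : t <= n ->
  (near_sigma (τ t) \/ near_gamma (τ t)) \/ near_ray (τ t).
Proof.
  intros Ht.
  assert (Htop : dist_le (cay gone) (up i α M) (ng + S M))
    by exact (dist_le_trans (path_dist_le (proj1 Hσ)) (path_dist_le (proj1 Hγ))).
  destruct (geodesic_of_dist_le Htop) as [lam [nl Glam]].
  destruct (thin_triangle Hhyp Hτ (geodesic_rev (up_geodesic i α M)) Glam Ht)
    as [s [[Hs Hd]|[Hs Hd]]].
  - right. exists (M - s). apply (dist_le_weaken Hd). lia.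
  - left.
    destruct (thin_triangle Hhyp Glam Hγ Hσ Hs) as [s' [[Hs' Hd']|[Hs' Hd']]].
    + right. exists s'. split; [exact Hs'|]. apply (dist_le_weaken (dist_le_trans Hd Hd')). lia.
    + left. exists s'. split; [exact Hs'|]. apply (dist_le_weaken (dist_le_trans Hd Hd')). lia.
Qed.

Lemma near_sigma_bound t : t <= n -> near_sigma (τ t) -> depth (τ t) + t <= ng + 4 * δ.
Proof.
  intros Ht [s [Hs Hd]].
  pose proof (geodesic_le_dist_start Hτ Ht
                (dist_le_trans (geodesic_dist_start Hσ Hs) (dist_le_sym Hd))).
  pose proof (dist_le_depth (geodesic_dist_end Hσ Hs)) as Hσs. simpl in Hσs.
  pose proof (dist_le_depth Hd). lia.
Qed.

Lemma near_gamma_bound t : t <= n -> near_gamma (τ t) ->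
  exists w, inH P i g w /\ dist_le (τ t) w (2 * δ) /\ t <= ng + depth w + 2 * δ + 1.
Proof.
  intros Ht [s [Hs Hd]]. exists (gam i g α M s).
  split; [exact (gam_inH M s Hα)|]. split; [exact Hd|].
  pose proof (geodesic_le_dist_start Hτ Ht
                (dist_le_trans (dist_le_trans (path_dist_le (proj1 Hσ))
                                              (geodesic_dist_start Hγ Hs)) (dist_le_sym Hd))).
  pose proof (gam_depth i g α Hs). lia.
Qed.

Lemma near_sigma_gamma_le t : t <= n -> near_sigma (τ t) \/ near_gamma (τ t) ->
  t <= ng + depth (τ t) + 4 * δ + 1.
Proof.
  intros Ht [Hs|Hg]; [pose proof (near_sigma_bound Ht Hs); lia|].
  destruct (near_gamma_bound Ht Hg) as [w [_ [Hd Hw]]].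
  pose proof (dist_le_depth Hd). lia.
Qed.

Lemma near_sigma_gamma_exit_le t : t < n -> near_sigma (τ t) \/ near_gamma (τ t) ->
  ~ deep_in_H (τ (S t)) -> t <= ng + 4 * δ + 2.
Proof.
  intros Ht [Hs|Hg] Hexit; [pose proof (near_sigma_bound (Nat.lt_le_incl _ _ Ht) Hs); lia|].
  destruct (near_gamma_bound (Nat.lt_le_incl _ _ Ht) Hg) as [w [Hw [Hd Htw]]].
  pose proof (inH_depth_le_of_exit (proj2 (proj2 (proj1 Hτ)) t Ht) Hexit Hw Hd). lia.
Qed.

Lemma near_ray_end t : t <= n -> near_ray (τ t) -> ~ deep_in_H (τ t) -> n - t <= 4 * δ.
Proof.
  intros Ht [e He] Hshallow.
  assert (He2 : e <= 2 * δ).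
  { destruct (le_lt_dec e (2 * δ)) as [|Hlt]; [assumption|]. exfalso. apply Hshallow.
    apply (dist_le_inH (dist_le_sym He) (inH_up _ Hα)). rewrite depth_up. exact Hlt. }
  pose proof (geodesic_le_dist_end Hτ Ht
                (dist_le_trans He (dist_le_sym (path_dist_le (up_path i α e))))). lia.
Qed.

Lemma foreign_component_le j h : ~ (forall v, inH P i g v <-> inH P j h v) -> regular P τ n ->
  forall k l, component (inH P j h) τ n k l -> l - k <= ng + 4 * δ + 3.
Proof.
  intros Hne Hreg k l Hc.
  destruct (component_ends_depth0 (proj1 Hτ) eq_refl eq_refl Hc) as [Hk Hl].
  destruct (regular_piece_profile Hk Hl (Hreg _ _ _ _ Hc)) as [A [HA [HdA Hlk]]].
  destruct (le_lt_dec (depth (τ A)) (2 * δ)) as [|Hdeep]; [lia|].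
  assert (Hfar : forall w, inH P i g w -> ~ dist_le (τ A) w (2 * δ)).
  { intros w Hw Hd. apply Hne.
    destruct (dist_le_inH Hd (proj1 (proj2 Hc) A HA) Hdeep) as [Hw' Hw0].
    exact (inH_eq_of_deep Hw Hw' Hw0). }
  assert (HAn : A <= n) by (destruct Hc; lia).
  destruct (tau_near_sides HAn) as [[Hs|Hg]|[e He]].
  - pose proof (near_sigma_bound HAn Hs). lia.
  - destruct (near_gamma_bound HAn Hg) as [w [Hw [Hd _]]]. contradiction (Hfar w Hw Hd).
  - contradiction (Hfar _ (inH_up _ Hα) He).
Qed.

Lemma tau_end_inH : inH P i g (τ n).
Proof. destruct Hτ as [[_ [-> _]] _]. exact Hα. Qed.

Lemma long_subsegment : exists k l, k <= l <= n /\
  (forall t, k <= t <= l -> inH P i g (τ t)) /\ n <= (l - k) + (ng + 8 * δ + 3).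
Proof.
  pose proof Hτ as [[τ0 [τn τadj]] _].
  assert (Hendpoint : n <= ng + 8 * δ + 3 -> exists k l, k <= l <= n /\
            (forall t, k <= t <= l -> inH P i g (τ t)) /\ n <= (l - k) + (ng + 8 * δ + 3)).
  { intros Hn. exists n, n. split; [lia|]. split; [|lia].
    intros t Ht. replace t with n by lia. exact tau_end_inH. }
  destruct (exists_last_nat (Q := fun t => near_sigma (τ t) \/ near_gamma (τ t)) n)
    as [ts [Hts [Hbase Hlast]]].
  { left. exists 0. split; [lia|]. rewrite τ0, <- (proj1 (proj1 Hσ)).
    exact (dist_le_weaken (dist_le_refl _) (Nat.le_0_l _)). }
  assert (Hray : forall t, ts < t <= n -> near_ray (τ t)).
  { intros t Ht. destruct (tau_near_sides (proj2 Ht)) as [Hb|Hr]; [|exact Hr].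
    contradiction (Hlast t Ht Hb). }
  destruct (Nat.eq_dec ts n) as [->|Htsn].
  { pose proof (near_sigma_gamma_le Hts Hbase) as Hn. rewrite τn in Hn. simpl in Hn.
    apply Hendpoint. lia. }
  destruct (classic (deep_in_H (τ (S ts)))) as [[Hin Hdp]|Hexit].
  - assert (HSts : S ts <= n) by lia.
    destruct (component_around HSts Hin) as [k [l [Hc Hkl]]].
    assert (Hkts : k <= ts).
    { pose proof (inH_adj Hin Hdp (adj_sym (τadj ts ltac:(lia)))) as Htsin.
      destruct Hc as [_ [_ [[Hk|Hk] _]]]; [lia|].
      destruct (le_lt_dec k ts); [assumption|].
      replace (k - 1) with ts in Hk by lia. contradiction. }
    destruct (component_ends_depth0 (proj1 Hτ) eq_refl eq_refl Hc) as [Hk0 _].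
    pose proof (path_depth_diff (proj1 Hτ) (conj Hkts Hts)).
    pose proof (near_sigma_gamma_le Hts Hbase).
    assert (Hnl : n - l <= 4 * δ + 1).
    { destruct Hc as [[_ Hln] [_ [_ [->|Hl]]]]; [lia|].
      destruct (Nat.eq_dec l n) as [->|]; [lia|].
      assert (Hl' : ts < S l <= n) by lia.
      pose proof (near_ray_end (proj2 Hl') (Hray _ Hl') (fun Hdeep => Hl (proj1 Hdeep))). lia. }
    exists k, l. split; [destruct Hc; lia|]. split; [exact (proj1 (proj2 Hc))|]. lia.
  - assert (Hts' : ts < S ts <= n) by lia.
    pose proof (near_sigma_gamma_exit_le (proj2 Hts') Hbase Hexit).
    pose proof (near_ray_end (proj2 Hts') (Hray _ Hts') Hexit).
    apply Hendpoint. lia.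
Qed.

End Quadrilateral.
End CuspedSpace.

Theorem mainTheorem4 (Γ : group) (I : Type) (P : I -> Γ -> Prop) (S : list Γ)
  (δ : nat)
  (HIfin : exists l : list I, forall i, In i l)
  (HPsub : forall i, is_subgroup (P i))
  (HPinf : forall i, ~ exists l : list Γ, forall x, P i x -> In x l)
  (HSsym : forall s, In s S -> In (ginv s) S)
  (HSgen : forall x, generated_by (fun _ => True) S x)
  (HPgen : forall i x, P i x -> generated_by (P i) S x)
  (Hδ : 1 <= δ) (Hhyp : hyperbolic P S δ)
  (g : Γ) (i : I) (α : Γ) (Hα : P i (gmul (ginv g) α))
  (ng : nat) (Hng : is_dist P S (cay gone) (cay g) ng)
  (τ : nat -> vert Γ I) (n : nat)
  (Hτ : geodesic P S τ n (cay gone) (cay α)) (Hreg : regular P τ n) :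
  (exists k l, k <= l <= n /\ (forall t, k <= t <= l -> inH P i g (τ t)) /\
     n <= (l - k) + (ng + 12 * δ)) /\
  (forall (j : I) (g' : Γ), ~ (forall v, inH P i g v <-> inH P j g' v) ->
     forall k l, component (inH P j g') τ n k l -> l - k <= ng + 12 * δ).
Proof.
  destruct Hng as [[σ Hσ] Hσmin].
  pose proof (conj Hσ Hσmin : geodesic P S σ ng (cay gone) (cay g)) as Gσ.
  destruct (classic (g = α)) as [<-|Hne].
  - pose proof (geodesic_le_dist Hτ (path_dist_le Hσ)).
    split.
    + exists n, n. split; [lia|]. split; [|lia].
      intros t Ht. replace t with n by lia. exact (tau_end_inH Hα Hτ).
    + intros j g' _ k l [Hkl _]. lia.
  - destruct (HPgen i _ Hα) as [w [Hw Hprod]].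
    assert (Hlen : word_len_le (P i) S (gmul (ginv g) α) (2 ^ Datatypes.S (length w))).
    { exists w. pose proof (Nat.pow_gt_lin_r 2 (Datatypes.S (length w)) ltac:(lia)).
      split; [exact Hw|]. split; [lia | exact Hprod]. }
    pose proof (gam_geodesic Hne Hα Hlen) as Gγ.
    split.
    + destruct (long_subsegment HPsub Hhyp Hα Gσ Hτ Gγ) as [k [l [Hkl [Hin Hn]]]].
      exists k, l. split; [exact Hkl|]. split; [exact Hin | lia].
    + intros j g' Hneq k l Hc.
      pose proof (foreign_component_le HPsub Hhyp Hα Gσ Hτ Gγ Hneq Hreg Hc). lia.
Qed.
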